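(* Let $\mathcal{A}\in\mathbb{R}^{d_1\times\cdots\times d_k}$ be an order-$k$ real tensor that is $\mathbf{0}_{[k]}$-OD. Then for every partition $\pi\in\mathcal{P}_{[k]}$ with $\pi\ne\mathbf{1}_{[k]}$, \[ \|\mathrm{Unfold}_\pi(\mathcal{A})\|_\sigma=\|\mathcal{A}\|_\sigma . \]
   Context: $\mathcal{P}_{[k]}$ is the set of partitions of $[k]$; $\mathbf{0}_{[k]}=\{\{1\},\dots,\{k\}\}$, $\mathbf{1}_{[k]}=\{[k]\}$. $\mathcal{A}$ is $\mathbf{0}_{[k]}$-OD if $\mathcal{A}=\sum_{n=1}^r\lambda_n\mathbf{a}^{(n)}_1\otimes\cdots\otimes\mathbf{a}^{(n)}_k$ with $\lambda_1\ge\cdots\ge\lambda_r\ge0$, $\mathbf{a}^{(n)}_i\in\mathbb{R}^{d_i}$, and $\langle\mathbf{a}^{(n)}_i,\mathbf{a}^{(m)}_i\rangle=\delta_{nm}$ for all $i\in[k]$, $n,m\in[r]$. For a real tensor $\mathcal{T}\in\mathbb{R}^{e_1\times\cdots\times e_m}$, $\|\mathcal{T}\|_\sigma=\sup\{\sum t_{i_1\dots i_m}x^{(1)}_{i_1}\cdots x^{(m)}_{i_m}:\ \|\mathbf{x}_n\|_2=1\}$. Unfolding: for $\pi=\{B_1,\dots,B_\ell\}$, $\mathrm{Unfold}_\pi(\mathcal{A})$ is the order-$\ell$ tensor of dimensions $(\prod_{j\in B_1}d_j,\dots,\prod_{j\in B_\ell}d_j)$ whose entry at $(m_1,\dots,m_\ell)$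 is $a_{i_1\dots i_k}$, where $m_j$ corresponds to $(i_r)_{r\in B_j}$ under a fixed bijection $\prod_{r\in B_j}[d_r]\to[\prod_{r\in B_j}d_r]$. *)

From HB Require Import structures.
From mathcomp Require Import all_boot all_order all_algebra.
From mathcomp Require Import reals.
Set Implicit Arguments. Unset Strict Implicit. Unset Printing Implicit Defensive.
Import Order.TTheory GRing.Theory Num.Theory.
Local Open Scope ring_scope.

Definition midx (m : nat) (e : 'I_m -> nat) := {dffun forall n : 'I_m, 'I_(e n)}.

Definition tensor (R : realType) (m : nat) (e : 'I_m -> nat) := midx e -> R.

Definition spectral_norm (R : realType) (m : nat) (e : 'I_m -> nat)
  (T : tensor R e) : R :=
  sup (fun s : R => exists x : forall n : 'I_m, 'I_(e n) -> R,
         (forall n : 'I_m, \sum_(t < e n) x n t ^+ 2 = 1) /\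
         s = \sum_(idx : midx e) T idx * \prod_(n < m) x n (idx n)).

Definition OD0 (R : realType) (k : nat) (d : 'I_k -> nat) (A : tensor R d) : Prop :=
  exists (r : nat) (lam : 'I_r -> R) (a : 'I_r -> forall i : 'I_k, 'I_(d i) -> R),
    [/\ (forall n m : 'I_r, (n <= m)%N -> lam m <= lam n),
        (forall n : 'I_r, 0 <= lam n),
        (forall (i : 'I_k) (n m : 'I_r),
            \sum_(t < d i) a n i t * a m i t = (n == m)%:R) &
        (forall idx : midx d, A idx = \sum_(n < r) lam n * \prod_(i < k) a n i (idx i))].

(* Partitions of [k] (as finite sets of nonempty, pairwise disjoint blocks
   covering [set: 'I_k]); 1_[k] is [set [set: 'I_k]]. *)
Definition is_partition (k : nat) (pi : {set {set 'I_k}}) : bool :=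
  finset.partition pi [set: 'I_k].

Definition one_part (k : nat) : {set {set 'I_k}} := [set [set: 'I_k]].

Definition block (k : nat) (pi : {set {set 'I_k}}) (j : nat) : {set 'I_k} :=
  nth set0 (enum pi) j.

Definition unfold_dim (k : nat) (d : 'I_k -> nat) (pi : {set {set 'I_k}})
  (j : 'I_#|pi|) : nat := \prod_(r in block pi j) d r.

(* Fixed bijection prod_{r in B_j} [d_r] -> [prod_{r in B_j} d_r]: mixed-radix
   encoding of (i_r)_{r in B_j}, ordered by increasing r (0-based). *)
Definition unfold_code (k : nat) (d : 'I_k -> nat) (B : {set 'I_k})
  (idx : midx d) : nat :=
  \sum_(r in B) (idx r : nat) * \prod_(s in B | (s < r)%N) d s.

(* Unfold_pi(A): entry at (m_1..m_l) is a_{i_1..i_k} for the (unique, since the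
   codes are bijective) multi-index i whose block codes are the m_j. *)
Definition unfold (R : realType) (k : nat) (d : 'I_k -> nat)
  (pi : {set {set 'I_k}}) (A : tensor R d) : tensor R (@unfold_dim k d pi) :=
  fun mi => \sum_(idx : midx d |
                  [forall j : 'I_#|pi|, @unfold_code k d (block pi j) idx == mi j])
              A idx.

(* The spectral norm of A = sum_n lam_n a_n^(1) o ... o a_n^(k) with orthonormal
   factors is the top weight lam_1, attained at the top component. Every rank-one
   evaluation of A is one of Unfold_pi(A): within each block take the Kronecker
   product of the unit vectors. Conversely, evaluating Unfold_pi(A) at unit vectors
   y_1, ..., y_l gives sum_n lam_n prod_j c_nj, where c_nj is the coefficient of y_j
   on the orthonormal family of block tensors (x)_{i in B_j} a_n^(i). Bessel gives
   sum_n c_nj^2 <= 1 for each j, and since pi has at least two blocks,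
   |prod_j c_nj| <= (c_n1^2 + c_n2^2) / 2, so the value is at most lam_1. *)

From HB Require Import structures.
From mathcomp Require Import all_boot all_order all_algebra reals.
From mathcomp Require Import zify ring lra.
From mathcomp Require boolp.
Set Implicit Arguments. Unset Strict Implicit. Unset Printing Implicit Defensive.
Import Order.TTheory GRing.Theory Num.Theory.
Local Open Scope ring_scope.

Section Patch.
Variables (k : nat) (d : 'I_k -> nat) (z : midx d).

Definition patch (S : {set 'I_k}) (p : midx d) : midx d :=
  [ffun i => if i \in S then p i else z i].

(* Multi-indices agreeing with [z] off [S] stand for the multi-indices of the
   modes in [S]; sums over them are sums over the sub-tensor indexed by [S]. *)
Definition fixed_off (S : {set 'I_k}) (p : midx d) : bool :=
  [forall i, (i \notin S) ==> (p i == z i)].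

Lemma patchE S p i : patch S p i = if i \in S then p i else z i.
Proof. by rewrite ffunE. Qed.

Lemma fixed_off_patch S p : fixed_off S (patch S p).
Proof. by apply/forallP => i; apply/implyP => /negPf iS; rewrite patchE iS. Qed.

Lemma patch_id S p : fixed_off S p -> patch S p = p.
Proof.
move/forallP => fix_p; apply/ffunP => i; rewrite patchE.
by case: ifP => // /negbT iS; move: (fix_p i); rewrite iS => /eqP.
Qed.

Lemma patch_patch (S T : {set 'I_k}) p : S \subset T -> patch S (patch T p) = patch S p.
Proof. by move/subsetP => sST; apply/ffunP => i; rewrite !patchE; case: ifP => // /sST ->. Qed.

Lemma fixed_off0 p : fixed_off set0 p = (p == z).
Proof.
apply/forallP/eqP => [fix_p|->]; last by move=> i; rewrite eqxx implybT.
by apply/ffunP => i; move: (fix_p i); rewrite in_set0 => /eqP.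
Qed.

Lemma sum_fixed_offU (R : pzRingType) (S T : {set 'I_k}) (F G : midx d -> R) :
  [disjoint S & T] ->
  (forall p, F p = F (patch S p)) -> (forall p, G p = G (patch T p)) ->
  \sum_(p | fixed_off (S :|: T) p) F p * G p =
  (\sum_(p | fixed_off S p) F p) * (\sum_(q | fixed_off T q) G q).
Proof.
move=> dST FS GT.
have TnS i : i \in T -> i \in S = false.
  by move=> iT; move: dST; rewrite disjoint_sym => /disjointFr /(_ iT).
pose merge (u : midx d * midx d) : midx d := [ffun i => if i \in S then u.1 i else u.2 i].
rewrite big_distrl /=; under [RHS]eq_bigr do rewrite big_distrr /=.
rewrite pair_big /= (reindex_onto (fun p => (patch S p, patch T p)) merge) /=.
  apply: eq_big => p; last by move=> _; rewrite -FS -GT.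
  apply/idP/idP => [fix_p|/andP[_ /eqP <-]].
    rewrite !fixed_off_patch; apply/eqP/ffunP => i; rewrite !ffunE.
    case: ifP => [-> //|iS]; case: ifP => // iT.
    by move/forallP: fix_p => /(_ i); rewrite in_setU iS iT => /eqP.
  apply/forallP => i; apply/implyP; rewrite in_setU negb_or => /andP[iS iT].
  by rewrite !ffunE (negPf iS) (negPf iT).
case=> p q /andP[fix_p fix_q]; congr pair.
  by rewrite -[RHS](patch_id fix_p); apply/ffunP => i; rewrite !ffunE; case: (i \in S).
rewrite -[RHS](patch_id fix_q); apply/ffunP => i; rewrite !ffunE.
by case: ifP => // iT; rewrite TnS.
Qed.

Lemma sum_prod_fixed_off_bigcup (R : comPzRingType) (J : finType) (B : J -> {set 'I_k})
    (F : J -> midx d -> R) (s : seq J) :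
  uniq s -> (forall j1 j2, j1 != j2 -> [disjoint B j1 & B j2]) ->
  (forall j p, F j p = F j (patch (B j) p)) ->
  \sum_(p | fixed_off (\bigcup_(j <- s) B j) p) \prod_(j <- s) F j p =
  \prod_(j <- s) \sum_(p | fixed_off (B j) p) F j p.
Proof.
move=> + disB FB; elim: s => [_|j s IH /andP[js us]].
  by rewrite !big_nil (big_pred1 z) ?big_nil // => p; rewrite fixed_off0.
rewrite big_cons big_cons; under [LHS]eq_bigr do rewrite big_cons.
rewrite sum_fixed_offU ?IH //.
  rewrite bigcup_seq; apply: bigcup_disjoint => i si.
  by apply: disB; apply: contraNneq js => ->.
move=> p; apply: eq_big_seq => i si; rewrite FB [RHS]FB patch_patch //.
by rewrite bigcup_seq; apply: bigcup_sup.
Qed.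

Lemma sum_fixed_off1 (R : pzRingType) i (g : 'I_(d i) -> R) :
  \sum_(p | fixed_off [set i] p) g (p i) = \sum_t g t.
Proof.
pose h (t : 'I_(d i)) : midx d := [ffun j => if j == i then insubd (z j) (val t) else z j].
have hi t : h t i = t by rewrite ffunE eqxx; apply: val_inj; rewrite val_insubd ltn_ord.
rewrite (reindex_onto h (fun p => p i)) /=.
  apply: eq_big => [t|t _]; last by rewrite hi.
  rewrite hi eqxx andbT; apply/forallP => j; apply/implyP; rewrite in_set1 => /negPf ji.
  by rewrite ffunE ji.
move=> p /forallP fix_p; apply/ffunP => j; rewrite ffunE.
case: eqP => [->|/eqP ji]; first by apply: val_inj; rewrite val_insubd ltn_ord.
by move: (fix_p j); rewrite in_set1 ji => /eqP.
Qed.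

Lemma sum_fixed_off_prod (R : comPzRingType) (B : {set 'I_k}) (g : forall i, 'I_(d i) -> R) :
  \sum_(p | fixed_off B p) \prod_(i in B) g i (p i) = \prod_(i in B) \sum_t g i t.
Proof.
have cupB : \bigcup_(i <- enum B) [set i] = B.
  apply/setP => x; rewrite bigcup_seq; apply/bigcupP/idP => [[i]|xB].
    by rewrite mem_enum => iB /set1P ->.
  by exists x; rewrite ?mem_enum ?set11.
have := @sum_prod_fixed_off_bigcup R _ (fun i => [set i]) (fun i p => g i (p i)) _ (enum_uniq B).
rewrite cupB => sum_prod.
transitivity (\sum_(p | fixed_off B p) \prod_(i <- enum B) g i (p i)).
  by apply: eq_bigr => p _; rewrite big_enum.
rewrite sum_prod.
- by rewrite big_enum; apply: eq_bigr => i _; rewrite sum_fixed_off1.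
- by move=> i j ij; rewrite disjoints1 in_set1.
by move=> i p; rewrite patchE set11.
Qed.

Lemma sum_midx_prod (R : comPzRingType) (g : forall i, 'I_(d i) -> R) :
  \sum_(idx : midx d) \prod_(i < k) g i (idx i) = \prod_(i < k) \sum_t g i t.
Proof.
have fixT p : fixed_off setT p by apply/forallP => i; rewrite in_setT.
rewrite -(eq_bigl _ _ fixT).
under eq_bigr do rewrite -(eq_bigl _ _ (in_setT (T:='I_k))).
by rewrite sum_fixed_off_prod; apply: eq_bigl => i; rewrite in_setT.
Qed.

End Patch.

Section BlockCode.
Variables (k : nat) (d : 'I_k -> nat).

Lemma unfold_code_split (B : {set 'I_k}) m (idx : midx d) :
  m \in B -> (forall r, r \in B -> r <= m)%N ->
  unfold_code B idx = (unfold_code (B :\ m) idx + idx m * \prod_(s in B :\ m) d s)%N.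
Proof.
move=> mB m_max; rewrite /unfold_code (bigD1 m) //= addnC; congr (_ + _)%N.
  apply: eq_big => [r|r /andP[rB rm]]; first by rewrite in_setD1 andbC.
  congr (_ * _)%N; apply: eq_bigl => s; rewrite in_setD1.
  apply/idP/idP => [/andP[-> sr]|/andP[/andP[_ ->] ->]] //; rewrite sr !andbT.
  by apply: contraTneq sr => ->; rewrite -leqNgt m_max.
congr (_ * _)%N; apply: eq_bigl => s; rewrite in_setD1.
apply/idP/idP => [/andP[sB sm]|/andP[sm sB]]; rewrite sB ?andbT.
  by apply: contraTneq sm => ->; rewrite ltnn.
by rewrite ltn_neqAle sm m_max.
Qed.

Lemma set_max_elem (B : {set 'I_k}) :
  B != set0 -> exists2 m, m \in B & forall r, r \in B -> (r <= m)%N.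
Proof.
case/set0Pn => i0 i0B.
by case: (@arg_maxnP _ i0 (mem B) val i0B) => m mB m_max; exists m => // r /m_max.
Qed.

Lemma unfold_code_lt (B : {set 'I_k}) (idx : midx d) :
  (unfold_code B idx < \prod_(r in B) d r)%N.
Proof.
move: {2}#|B| (erefl #|B|) => n; elim: n B => [|n IH] B cardB.
  by rewrite (cards0_eq cardB) /unfold_code !big_set0.
have [|m mB m_max] := @set_max_elem B; first by rewrite -cards_eq0 cardB.
have cardBm : #|B :\ m| = n by move: cardB; rewrite (cardsD1 m) mB => -[].
have prodB : (\prod_(r in B) d r = d m * \prod_(s in B :\ m) d s)%N.
  by rewrite (bigD1 m mB); congr (_ * _)%N; apply: eq_bigl => s; rewrite in_setD1 andbC.
rewrite (unfold_code_split idx mB m_max) prodB.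
have := IH _ cardBm; have := ltn_ord (idx m); nia.
Qed.

Lemma unfold_code_inj (B : {set 'I_k}) (p q : midx d) :
  unfold_code B p = unfold_code B q -> forall r, r \in B -> p r = q r.
Proof.
move: {2}#|B| (erefl #|B|) => n; elim: n B => [|n IH] B cardB.
  by move=> _ r; rewrite (cards0_eq cardB) in_set0.
have [|m mB m_max] := @set_max_elem B; first by rewrite -cards_eq0 cardB.
have cardBm : #|B :\ m| = n by move: cardB; rewrite (cardsD1 m) mB => -[].
rewrite (unfold_code_split p mB m_max) (unfold_code_split q mB m_max) => codes r rB.
have := unfold_code_lt (B :\ m) p; have := unfold_code_lt (B :\ m) q.
move: codes; set N := (\prod_(s in B :\ m) d s)%N.
set cp := unfold_code _ p; set cq := unfold_code _ q => codes cq_lt cp_lt.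
have pq_m : (p m : nat) = q m by nia.
have [->|rm] := eqVneq r m; first exact: val_inj.
by apply: (IH _ cardBm); [nia | rewrite in_setD1 rm].
Qed.

End BlockCode.

Lemma bessel_inequality (R : realFieldType) (I : finType) (Q : pred I) r
    (e : 'I_r -> I -> R) (u : I -> R) :
  (forall n m, \sum_(p | Q p) e n p * e m p = (n == m)%:R) ->
  \sum_(n < r) (\sum_(p | Q p) e n p * u p) ^+ 2 <= \sum_(p | Q p) u p ^+ 2.
Proof.
move=> e_orth; set c := fun n => \sum_(p | Q p) e n p * u p.
pose v p := \sum_(n < r) c n * e n p.
have vu : \sum_(p | Q p) v p * u p = \sum_(n < r) c n ^+ 2.
  under eq_bigr do rewrite big_distrl /=.
  rewrite exchange_big /=; apply: eq_bigr => n _.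
  by rewrite expr2 /c big_distrr /=; apply: eq_bigr => p _; ring.
have vv : \sum_(p | Q p) v p * v p = \sum_(n < r) c n ^+ 2.
  under eq_bigr do rewrite big_distrl /=.
  rewrite exchange_big /=; apply: eq_bigr => n _.
  transitivity (c n * \sum_(m < r) c m * (n == m)%:R).
    rewrite big_distrr /=; under eq_bigr do rewrite big_distrr /=.
    rewrite exchange_big /=; apply: eq_bigr => m _.
    by rewrite -e_orth !big_distrr /=; apply: eq_bigr => p _; ring.
  rewrite (bigD1 n) //= eqxx big1 ?addr0 ?mulr1 ?expr2 // => m /negPf.
  by rewrite eq_sym => ->; rewrite mulr0.
have : 0 <= \sum_(p | Q p) (u p - v p) ^+ 2 by apply: sumr_ge0 => p _; apply: sqr_ge0.
have -> : \sum_(p | Q p) (u p - v p) ^+ 2 =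
    \sum_(p | Q p) u p ^+ 2 - 2 * \sum_(p | Q p) v p * u p + \sum_(p | Q p) v p * v p.
  by rewrite big_distrr /= -sumrB -big_split /=; apply: eq_bigr => p _; ring.
rewrite vu vv; lra.
Qed.

Lemma sum_fiber_inj (R : pzRingType) (I J : finType) (Q : pred I) (c : I -> J)
    (F : I -> R) (G : R -> R) :
  {in Q &, injective c} -> G 0 = 0 ->
  \sum_j G (\sum_(p | Q p && (c p == j)) F p) = \sum_(p | Q p) G (F p).
Proof.
move=> c_inj G0; rewrite [RHS](partition_big c predT) //=; apply: eq_bigr => j _.
case: (pickP (fun p => Q p && (c p == j))) => [p0 /andP[Qp0 /eqP cp0]|fiber0].
  have fiber1 : (fun p => Q p && (c p == j)) =1 pred1 p0.
    move=> p /=; apply/andP/eqP => [[Qp /eqP cp]|->]; last by rewrite Qp0 cp0.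
    by apply: c_inj; rewrite // cp cp0.
  by rewrite !(big_pred1 p0 fiber1).
by rewrite !big_pred0.
Qed.

Lemma prod_le_avg_sqr (R : realFieldType) (J : finType) (c : J -> R) (j0 j1 : J) :
  j0 != j1 -> (forall j, c j ^+ 2 <= 1) ->
  \prod_j c j <= (c j0 ^+ 2 + c j1 ^+ 2) / 2.
Proof.
move=> j01 c_le1.
have norm_le1 j : `|c j| <= 1 by rewrite -(@expr_le1 _ 2) // -normrX ger0_norm ?sqr_ge0.
have sqr_norm j : `|c j| ^+ 2 = c j ^+ 2 by rewrite -normrX ger0_norm ?sqr_ge0.
have amgm (x y : R) : x * y <= (x ^+ 2 + y ^+ 2) / 2 by have := sqr_ge0 (x - y); nra.
apply: le_trans (ler_norm _) _.
rewrite normr_prod (bigD1 j0) //= (bigD1 j1) 1?eq_sym //= -!sqr_norm.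
apply: le_trans (amgm _ _); rewrite mulrA; apply: ler_piMr; first exact: mulr_ge0.
by apply: prodr_ile1 => j _; rewrite normr_ge0 norm_le1.
Qed.

Section Partition.
Variables (k : nat) (pi : {set {set 'I_k}}).
Hypothesis pi_part : is_partition pi.

Lemma block_in (j : 'I_#|pi|) : block pi j \in pi.
Proof. by rewrite /block -mem_enum mem_nth // -cardE. Qed.

Lemma block_disjoint (j1 j2 : 'I_#|pi|) : j1 != j2 -> [disjoint block pi j1 & block pi j2].
Proof.
have /and3P[_ /trivIsetP pi_triv _] := pi_part.
by move=> j12; apply: pi_triv; rewrite ?block_in // /block nth_uniq ?enum_uniq // -?cardE.
Qed.

Lemma block_neq0 (j : 'I_#|pi|) : block pi j != set0.
Proof. by have /and3P[_ _ pi0] := pi_part; apply: contraNneq pi0 => <-; exact: block_in. Qed.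

Lemma block_cover i : exists j : 'I_#|pi|, i \in block pi j.
Proof.
have /and3P[/eqP pi_cover _ _] := pi_part.
have : i \in cover pi by rewrite pi_cover in_setT.
case/bigcupP => B Bpi iB.
have Bidx : (index B (enum pi) < #|pi|)%N by rewrite cardE index_mem mem_enum.
by exists (Ordinal Bidx); rewrite /block nth_index ?mem_enum.
Qed.

Lemma bigcup_blocks : \bigcup_(j < #|pi|) block pi j = setT.
Proof.
apply/setP => i; rewrite in_setT; have [j ij] := block_cover i.
by apply/bigcupP; exists j.
Qed.

Lemma prod_blocks (R : comPzRingType) (f : 'I_k -> R) :
  \prod_i f i = \prod_(j < #|pi|) \prod_(i in block pi j) f i.
Proof.
have /and3P[/eqP pi_cover pi_triv _] := pi_part.
transitivity (\prod_(i in cover pi) f i); first by apply: eq_bigl => i; rewrite pi_cover in_setT.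
rewrite big_trivIset // -big_enum /= (big_nth set0) cardE big_mkord.
by apply: eq_bigr.
Qed.

Lemma card_partition_gt1 : (0 < k)%N -> pi != one_part k -> (1 < #|pi|)%N.
Proof.
move=> k_gt0 pi_neq1; have [j _] := block_cover (Ordinal k_gt0).
rewrite ltn_neqAle (leq_ltn_trans _ (ltn_ord j)) // andbT eq_sym.
apply: contra pi_neq1 => /cards1P[B piB]; rewrite piB /one_part -(cover1 B) -piB.
by have /and3P[/eqP -> _ _] := pi_part.
Qed.

End Partition.

Section MultilinearForm.
Variable R : realType.

Definition mlform m (e : 'I_m -> nat) (T : tensor R e)
    (x : forall n : 'I_m, 'I_(e n) -> R) : R :=
  \sum_(idx : midx e) T idx * \prod_(n < m) x n (idx n).

Definition unit_family m (e : 'I_m -> nat) (x : forall n : 'I_m, 'I_(e n) -> R) : Prop :=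
  forall n, \sum_(t < e n) x n t ^+ 2 = 1.

Lemma spectral_norm_attained m (e : 'I_m -> nat) (T : tensor R e) (L : R) :
  (exists2 x, unit_family x & mlform T x = L) ->
  (forall x, unit_family x -> mlform T x <= L) ->
  spectral_norm T = L.
Proof.
move=> [x x_unit TxL] T_le; apply/le_anti/andP; split.
  by apply: ge_sup => [|_ [y [y_unit ->]]]; [exists L, x | exact: T_le].
by apply: ub_le_sup; [exists L => _ [y [y_unit ->]]; exact: T_le | exists x].
Qed.

Lemma spectral_norm_order0 m (e : 'I_m -> nat) (T : tensor R e) :
  m = 0%N -> spectral_norm T = \sum_(idx : midx e) T idx.
Proof.
move=> m0; have no_mode (n : 'I_m) : False by case: n; rewrite m0.
have mlformE x : mlform T x = \sum_(idx : midx e) T idx.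
  by apply: eq_bigr => idx _; rewrite big1 ?mulr1 // => n; case: (no_mode n).
apply: spectral_norm_attained => [|x _]; last by rewrite mlformE.
by exists (fun _ _ => 0) => [n|]; [case: (no_mode n) | exact: mlformE].
Qed.

Lemma spectral_norm_dim0 m (e : 'I_m -> nat) (T : tensor R e) n :
  e n = 0%N -> spectral_norm T = 0.
Proof.
move=> en0; rewrite -[RHS](sup0 R); congr sup.
apply: boolp.funext => s; apply: boolp.propext; split => // -[x [x_unit _]].
move: (x_unit n); move: (x n); rewrite en0 => xn.
by rewrite big_ord0 => /esym/eqP; rewrite oner_eq0.
Qed.

End MultilinearForm.

Definition block_code k (d : 'I_k -> nat) (pi : {set {set 'I_k}}) (j : 'I_#|pi|)
    (idx : midx d) : 'I_(unfold_dim d j) :=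
  Ordinal (unfold_code_lt (block pi j) idx).

Section Unfolding.
Variables (R : realType) (k : nat) (d : 'I_k -> nat) (pi : {set {set 'I_k}}).
Variable A : tensor R d.

Lemma mlform_unfold (y : forall j : 'I_#|pi|, 'I_(unfold_dim d j) -> R) :
  mlform (@unfold _ _ _ pi A) y = \sum_(idx : midx d) A idx * \prod_(j < #|pi|) y j (block_code j idx).
Proof.
rewrite /mlform /unfold; under eq_bigr do rewrite big_distrl /=.
rewrite (exchange_big_dep xpredT) //=; apply: eq_bigr => idx _.
pose codes : midx (unfold_dim d (pi:=pi)) := [ffun j => block_code j idx].
rewrite (big_pred1 codes) => [|mi /=].
  by congr (_ * _); apply: eq_bigr => j _; rewrite ffunE.
apply/forallP/eqP => [mi_codes|->]; last by move=> j; rewrite ffunE.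
by apply/ffunP => j; rewrite ffunE; apply: val_inj; rewrite /= (eqP (mi_codes j)).
Qed.

Hypothesis pi_part : is_partition pi.

Lemma spectral_norm_unfold_order0 :
  k = 0%N -> spectral_norm (@unfold _ _ _ pi A) = spectral_norm A.
Proof.
move=> k0; have no_block : #|pi| = 0%N.
  apply/eqP; apply: contraT; rewrite -lt0n => pi_gt0.
  have /set0Pn[[i i_lt] _] := block_neq0 pi_part (Ordinal pi_gt0).
  by move: i_lt; rewrite k0.
rewrite !spectral_norm_order0 //.
transitivity (mlform (@unfold _ _ _ pi A) (fun _ _ => 1)).
  by apply: eq_bigr => mi _; rewrite prodr_const expr1n mulr1.
rewrite mlform_unfold; apply: eq_bigr => idx _.
by rewrite prodr_const expr1n mulr1.
Qed.

Lemma spectral_norm_unfold_dim0 i :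
  d i = 0%N -> spectral_norm (@unfold _ _ _ pi A) = spectral_norm A.
Proof.
move=> di0; have [j ij] := block_cover pi_part i.
have dj0 : unfold_dim d j = 0%N by rewrite /unfold_dim (bigD1 i) //= di0 mul0n.
by rewrite (spectral_norm_dim0 _ di0) (spectral_norm_dim0 _ dj0).
Qed.

Variable z : midx d.

Lemma block_code_patch (j : 'I_#|pi|) p :
  block_code j (patch z (block pi j) p) = block_code j p.
Proof. by apply: val_inj; apply: eq_bigr => r rB; rewrite patchE rB. Qed.

Lemma block_code_inj (j : 'I_#|pi|) :
  {in fixed_off z (block pi j) &, injective (block_code j)}.
Proof.
move=> p q fix_p fix_q /(congr1 val) /unfold_code_inj pq_B.
rewrite -(patch_id fix_p) -(patch_id fix_q); apply/ffunP => i; rewrite !patchE.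
by case: ifP => // /pq_B.
Qed.

Lemma sum_sqr_block_code_le1 (j : 'I_#|pi|) (y : 'I_(unfold_dim d j) -> R) :
  \sum_t y t ^+ 2 = 1 ->
  \sum_(p | fixed_off z (block pi j) p) y (block_code j p) ^+ 2 <= 1.
Proof.
move=> y_unit; set Q := fixed_off z (block pi j).
rewrite -(big_imset (fun t => y t ^+ 2) (@block_code_inj j)) -{}y_unit /=.
rewrite [leRHS](bigID (mem [set block_code j p | p in Q])) /= lerDl.
by apply: sumr_ge0 => t _; exact: sqr_ge0.
Qed.

(* [y j] is the Kronecker product of the [x i], [i] in block [j], laid out by block code. *)
Lemma mlform_unfold_embed (x : forall i : 'I_k, 'I_(d i) -> R) : unit_family x ->
  exists2 y, unit_family y & mlform A x = mlform (@unfold _ _ _ pi A) y.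
Proof.
move=> x_unit.
pose y (j : 'I_#|pi|) t := \sum_(p | fixed_off z (block pi j) p && (block_code j p == t))
                               \prod_(i in block pi j) x i (p i).
exists y => [j|].
  rewrite (sum_fiber_inj _ (G := fun t => t ^+ 2) (@block_code_inj j)) ?expr0n //.
  under eq_bigr do rewrite -prodrXl.
  by rewrite (sum_fixed_off_prod z _ (fun i t => x i t ^+ 2)) big1 // => i _; rewrite x_unit.
rewrite mlform_unfold; apply: eq_bigr => idx _; congr (_ * _).
rewrite (prod_blocks pi_part); apply: eq_bigr => j _.
rewrite /y (big_pred1 (patch z (block pi j) idx)) => [|p /=].
  by apply: eq_bigr => i iB; rewrite patchE iB.
apply/andP/eqP => [[fix_p /eqP p_code]|->]; last by rewrite fixed_off_patch block_code_patch.
apply: (@block_code_inj j) => //; first exact: fixed_off_patch.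
by rewrite p_code block_code_patch.
Qed.

End Unfolding.

Section OrthogonalDecomposition.
Variables (R : realType) (k : nat) (d : 'I_k -> nat) (z : midx d) (A : tensor R d).
Variables (r : nat) (lam : 'I_r -> R) (a : 'I_r -> forall i : 'I_k, 'I_(d i) -> R).
Arguments a : clear implicits.
Hypothesis lam_ge0 : forall n, 0 <= lam n.
Hypothesis a_orth : forall (i : 'I_k) (n m : 'I_r), \sum_(t < d i) a n i t * a m i t = (n == m)%:R.
Hypothesis A_OD : forall idx, A idx = \sum_(n < r) lam n * \prod_(i < k) a n i (idx i).

Lemma unit_family_component n : unit_family (a n).
Proof. by move=> i; under eq_bigr do rewrite expr2; rewrite a_orth eqxx. Qed.

Lemma mlform_OD (x : forall i : 'I_k, 'I_(d i) -> R) :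
  mlform A x = \sum_(n < r) lam n * \prod_(i < k) \sum_t a n i t * x i t.
Proof.
rewrite /mlform; under eq_bigr do rewrite A_OD big_distrl /=.
rewrite exchange_big /=; apply: eq_bigr => n _.
under eq_bigr do rewrite -mulrA -big_split /=.
by rewrite -big_distrr /= (sum_midx_prod z (fun i t => a n i t * x i t)).
Qed.

Lemma mlform_OD_component n : (0 < k)%N -> mlform A (a n) = lam n.
Proof.
move=> k_gt0; rewrite mlform_OD (bigD1 n) //= [X in _ + X]big1 => [|m /negPf mn].
  by rewrite addr0 big1 ?mulr1 // => i _; rewrite a_orth eqxx.
by rewrite (bigD1 (Ordinal k_gt0)) //= a_orth mn mul0r mulr0.
Qed.

Lemma OD_top_attained : (0 < k)%N -> (forall n m : 'I_r, (n <= m)%N -> lam m <= lam n) ->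
  exists L, [/\ 0 <= L, forall n, lam n <= L & exists2 x, unit_family x & mlform A x = L].
Proof.
move=> k_gt0 lam_sorted; have [r0|r_gt0] := posnP r.
  have no_component (n : 'I_r) : False by case: n => n; rewrite r0.
  exists 0; split=> [//|n|]; first by case: (no_component n).
  exists (fun i t => (t == z i)%:R) => [i|].
    by rewrite (bigD1 (z i)) //= eqxx expr1n big1 ?addr0 // => t /negPf ->; rewrite expr0n.
  by apply: big1 => idx _; rewrite A_OD big1 ?mul0r // => n; case: (no_component n).
pose n0 := Ordinal r_gt0; exists (lam n0); split=> [//|n|]; first exact: lam_sorted.
by exists (a n0); [exact: unit_family_component | exact: mlform_OD_component].
Qed.

Variable pi : {set {set 'I_k}}.
Hypothesis pi_part : is_partition pi.

Definition block_coef (n : 'I_r) (j : 'I_#|pi|) (y : 'I_(unfold_dim d j) -> R) : R :=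
  \sum_(p | fixed_off z (block pi j) p) (\prod_(i in block pi j) a n i (p i)) * y (block_code j p).

Lemma block_component_orthonormal (j : 'I_#|pi|) n m :
  \sum_(p | fixed_off z (block pi j) p)
     (\prod_(i in block pi j) a n i (p i)) * (\prod_(i in block pi j) a m i (p i)) = (n == m)%:R.
Proof.
under eq_bigr do rewrite -big_split /=.
rewrite (sum_fixed_off_prod z _ (fun i t => a n i t * a m i t)).
under eq_bigr do rewrite a_orth.
rewrite prodr_const; case: (n == m); first by rewrite expr1n.
by rewrite expr0n; move: (block_neq0 pi_part j); rewrite -cards_eq0 => /negPf ->.
Qed.

Lemma sum_sqr_block_coef_le1 (j : 'I_#|pi|) (y : 'I_(unfold_dim d j) -> R) :
  \sum_t y t ^+ 2 = 1 -> \sum_(n < r) block_coef n y ^+ 2 <= 1.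
Proof.
move=> y_unit; apply: le_trans (sum_sqr_block_code_le1 z y_unit).
exact: bessel_inequality (block_component_orthonormal j).
Qed.

Lemma mlform_unfold_OD (y : forall j : 'I_#|pi|, 'I_(unfold_dim d j) -> R) :
  mlform (@unfold _ _ _ pi A) y = \sum_(n < r) lam n * \prod_(j < #|pi|) block_coef n (y j).
Proof.
rewrite mlform_unfold; under eq_bigr do rewrite A_OD big_distrl /=.
rewrite exchange_big /=; apply: eq_bigr => n _.
under eq_bigr do rewrite -mulrA (prod_blocks pi_part) -big_split /=.
rewrite -big_distrr /=; congr (_ * _).
have cover_pi p : fixed_off z (\bigcup_(j < #|pi|) block pi j) p.
  by apply/forallP => i; rewrite bigcup_blocks // in_setT.
rewrite -(eq_bigl _ _ cover_pi) sum_prod_fixed_off_bigcup ?index_enum_uniq //.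
- exact: block_disjoint.
move=> j p; congr (_ * _); last by rewrite block_code_patch.
by apply: eq_bigr => i iB; rewrite patchE iB.
Qed.

Lemma mlform_unfold_OD_le (L : R) (y : forall j : 'I_#|pi|, 'I_(unfold_dim d j) -> R) :
  (1 < #|pi|)%N -> 0 <= L -> (forall n, lam n <= L) -> unit_family y ->
  mlform (@unfold _ _ _ pi A) y <= L.
Proof.
move=> pi_gt1 L_ge0 lam_le y_unit.
pose j0 : 'I_#|pi| := Ordinal (ltnW pi_gt1); pose j1 : 'I_#|pi| := Ordinal pi_gt1.
have j01 : j0 != j1 by [].
have bessel j := sum_sqr_block_coef_le1 (y_unit j).
have coef_le1 n j : block_coef n (y j) ^+ 2 <= 1.
  apply: le_trans (bessel j); rewrite (bigD1 n) //= lerDl.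
  by apply: sumr_ge0 => m _; exact: sqr_ge0.
set c := fun n j => block_coef n (y j).
rewrite mlform_unfold_OD.
apply: (@le_trans _ _ (\sum_(n < r) L * ((c n j0 ^+ 2 + c n j1 ^+ 2) / 2))).
  apply: ler_sum => n _.
  apply: le_trans (ler_wpM2l (lam_ge0 n) (prod_le_avg_sqr j01 (coef_le1 n))) _.
  by apply: ler_wpM2r; [apply: divr_ge0; rewrite ?addr_ge0 ?sqr_ge0 | exact: lam_le].
rewrite -big_distrr /= -big_distrl /= big_split /=.
by have := bessel j0; have := bessel j1; nra.
Qed.

Lemma spectral_norm_unfold_OD : (0 < k)%N -> (1 < #|pi|)%N ->
  (forall n m : 'I_r, (n <= m)%N -> lam m <= lam n) ->
  spectral_norm (@unfold _ _ _ pi A) = spectral_norm A.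
Proof.
move=> k_gt0 pi_gt1 lam_sorted.
have [L [L_ge0 lam_le [x x_unit AxL]]] := OD_top_attained k_gt0 lam_sorted.
have unfold_le y : unit_family y -> mlform (@unfold _ _ _ pi A) y <= L.
  exact: mlform_unfold_OD_le.
have normA : spectral_norm A = L.
  apply: spectral_norm_attained => [|x' x'_unit]; first by exists x.
  by have [y y_unit ->] := mlform_unfold_embed A pi_part z x'_unit; exact: unfold_le.
rewrite normA; apply: spectral_norm_attained unfold_le.
by have [y y_unit Axy] := mlform_unfold_embed A pi_part z x_unit; exists y; rewrite // -Axy.
Qed.

End OrthogonalDecomposition.

Theorem corollary5p6 (R : realType) (k : nat) (d : 'I_k -> nat)
  (A : tensor R d) :
  OD0 A ->
  forall pi : {set {set 'I_k}}, is_partition pi -> pi != one_part k ->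
    spectral_norm (@unfold R k d pi A) = spectral_norm A.
Proof.
move=> [r [lam [a [lam_sorted lam_ge0 a_orth A_OD]]]] pi pi_part pi_neq1.
have [k0|k_gt0] := posnP k; first exact: spectral_norm_unfold_order0.
have [/forallP d_gt0|] := boolP [forall i, 0 < d i]%N; last first.
  rewrite negb_forall => /existsP[i]; rewrite -eqn0Ngt => /eqP di0.
  exact: spectral_norm_unfold_dim0 di0.
pose z : midx d := [ffun i => Ordinal (d_gt0 i)].
apply: (spectral_norm_unfold_OD z lam_ge0 a_orth A_OD pi_part) => //.
exact: card_partition_gt1.
Qed.
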